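(* Let $F(p)=\frac12|p|^2$ for $p\in\mathbb{R}$ and $g(x)=-|x|$ for $x\in\mathbb{R}$. For $\varepsilon>0$ let $u^\varepsilon$ be the viscosity solution of $u^\varepsilon_t+\frac12|u^\varepsilon_x|^2=\varepsilon u^\varepsilon_{xx}$ in $\mathbb{R}\times(0,\infty)$, $u^\varepsilon(\cdot,0)=g$, and let $u$ be the viscosity solution of $u_t+\frac12|u_x|^2=0$ in $\mathbb{R}\times(0,\infty)$, $u(\cdot,0)=g$. Then there is a constant $C>0$ such that for all $\varepsilon\in(0,1)$ and $T>0$, \[ \|u^\varepsilon-u\|_{L^\infty(\mathbb{R}\times[0,T])}\le C\sqrt{T\varepsilon}, \] and this bound is sharp in the sense that for each $\varepsilon\in(0,1)$, \[ \lim_{t\to0^+}\frac{u^\varepsilon(0,t)-u(0,t)}{\sqrt{t\varepsilon}}=-\frac{2}{\sqrt{\pi}}. \] *)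

From Stdlib Require Import Reals Lra.
From Coquelicot Require Import Coquelicot.
Open Scope R_scope.

Definition pt (phi : R -> R -> R) (x t : R) : R := Derive (fun s => phi x s) t.
Definition px (phi : R -> R -> R) (x t : R) : R := Derive (fun y => phi y t) x.
Definition pxx (phi : R -> R -> R) (x t : R) : R :=
  Derive (fun y => Derive (fun z => phi z t) y) x.

Definition jcont (f : R -> R -> R) (x t : R) : Prop :=
  forall e, 0 < e -> exists d, 0 < d /\
    forall y s, Rabs (y - x) < d -> Rabs (s - t) < d -> Rabs (f y s - f x t) < e.

Definition test_fn (phi : R -> R -> R) : Prop :=
  forall x t,
    ex_derive (fun s => phi x s) t /\
    ex_derive (fun y => phi y t) x /\
    ex_derive (fun y => Derive (fun z => phi z t) y) x /\
    jcont phi x t /\ jcont (pt phi) x t /\ jcont (px phi) x t /\ jcont (pxx phi) x t.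

Definition cont_closed_halfplane (u : R -> R -> R) : Prop :=
  forall x t, 0 <= t -> forall e, 0 < e -> exists d, 0 < d /\
    forall y s, 0 <= s -> Rabs (y - x) < d -> Rabs (s - t) < d ->
      Rabs (u y s - u x t) < e.

Definition visc_sub (F : R -> R) (eps : R) (u : R -> R -> R) : Prop :=
  forall phi x0 t0, test_fn phi -> 0 < t0 ->
    (exists d, 0 < d /\ forall x t, 0 < t -> Rabs (x - x0) < d -> Rabs (t - t0) < d ->
        u x t - phi x t <= u x0 t0 - phi x0 t0) ->
    pt phi x0 t0 + F (px phi x0 t0) - eps * pxx phi x0 t0 <= 0.

Definition visc_super (F : R -> R) (eps : R) (u : R -> R -> R) : Prop :=
  forall phi x0 t0, test_fn phi -> 0 < t0 ->
    (exists d, 0 < d /\ forall x t, 0 < t -> Rabs (x - x0) < d -> Rabs (t - t0) < d ->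
        u x t - phi x t >= u x0 t0 - phi x0 t0) ->
    pt phi x0 t0 + F (px phi x0 t0) - eps * pxx phi x0 t0 >= 0.

(* uniqueness class: at most linear growth in x, locally uniformly in time *)
Definition linear_growth (u : R -> R -> R) : Prop :=
  forall T, 0 < T -> exists K, 0 < K /\
    forall x t, 0 <= t <= T -> Rabs (u x t) <= K * (1 + Rabs x).

Definition visc_solution (F : R -> R) (eps : R) (g : R -> R) (u : R -> R -> R) : Prop :=
  cont_closed_halfplane u /\ linear_growth u /\
  (forall x, u x 0 = g x) /\ visc_sub F eps u /\ visc_super F eps u.

Definition Fq (p : R) : R := / 2 * Rabs p ^ 2.
Definition g0 (x : R) : R := - Rabs x.

(* Everything follows by comparing the solutions with explicit classical barriers. The planes
   [+-x - t/2] are supersolutions, so [ue <= -|x| - t/2]. Let [w] be the heat flow of [|x|] at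
   time [eps t], i.e. [w = heat_abs x (2 sqrt (eps t))], written with erf; as [|w_x| <= 1],
   [-w - t/2] is a subsolution, and [w <= |x| + (2/sqrt PI) sqrt (eps t)] gives
   [ue >= -|x| - t/2 - (2/sqrt PI) sqrt (eps t)]. Also [-w] itself is a supersolution, which
   at [x = 0] gives [ue (0, t) <= -(2/sqrt PI) sqrt (eps t)]. For [eps = 0] the bounds pin
   down [u = -|x| - t/2], and both claims follow. The barriers are made smooth at [t = 0] by
   a small time shift [s], removed at the end.
   The comparison between a viscosity solution and a smooth strict sub/supersolution is proved
   by penalization: if they were misordered, a perturbed difference would have an interior
   minimum, where the viscosity inequality contradicts the classical one. *)

From Stdlib Require Import Reals Lra.
From Coquelicot Require Import Coquelicot.
From mathcomp Require all_boot all_algebra classical_sets set_interval topology normedtype derive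
  Rstruct_topology.
Open Scope R_scope.
(* Requiring ssreflect switches bullet checking off globally; restore the default. *)
Set Bullet Behavior "Strict Subproofs".

Module RectangleMin.
Import all_boot all_algebra classical_sets set_interval topology normedtype derive Rstruct_topology.
Import Num.Theory numFieldNormedType.Exports.
Local Open Scope classical_set_scope.
Local Open Scope R_scope.

Lemma rectangle_min (f : R -> R -> R) (a b c d : R) : a <= b -> c <= d ->
  (forall x t, a <= x <= b -> c <= t <= d -> forall e, 0 < e -> exists del, 0 < del /\
    forall y s, a <= y <= b -> c <= s <= d -> Rabs (y - x) < del -> Rabs (s - t) < del ->
     Rabs (f y s - f x t) < e) ->
  exists x0 t0, a <= x0 <= b /\ c <= t0 <= d /\
   forall x t, a <= x <= b -> c <= t <= d -> f x0 t0 <= f x t.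
Proof.
move=> ab cd hc.
pose A : set (R * R)%type := (`[a, b]%classic `*` `[c, d]%classic).
have A0 : A !=set0.
  by exists (a, c); split; rewrite /= in_itv /=; apply/andP; split; apply/RleP; lra.
have cA : compact A by apply: compact_setX; apply: segment_compact.
have cf : {within A, continuous (fun p => f p.1 p.2)}.
  apply/subspace_continuousP => -[x t] [/= xab tcd].
  apply/(@cvgrPdist_lt _ R^o) => e /RltP e0.
  move: xab tcd; rewrite !in_itv /= => /andP[/RleP ax /RleP xb] /andP[/RleP ct /RleP td].
  have [del [del0 H]] := hc x t (conj ax xb) (conj ct td) e e0.
  rewrite /within /=; apply/nbhs_ballP; exists del => /=; first by apply/RltP.
  move=> [y s] [/= bxy bts] [/= yab scd].
  move: yab scd; rewrite !in_itv /= => /andP[/RleP ay /RleP yb] /andP[/RleP cs /RleP sd].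
  move: bxy bts; rewrite /ball /= => /RltP bxy /RltP bts.
  rewrite -RminusE -RabsE Rabs_minus_sym in bxy.
  rewrite -RminusE -RabsE Rabs_minus_sym in bts.
  by rewrite distrC; apply/RltP; rewrite -RminusE -RabsE; apply: H.
have [[x0 t0] /set_mem [/= H1 H2] Hmin] := compact_EVT_min A0 cA cf.
move: H1 H2; rewrite !in_itv /= => /andP[/RleP ? /RleP ?] /andP[/RleP ? /RleP ?].
exists x0, t0; split; [lra|split; [lra|]].
move=> x t hx ht; apply/RleP; apply: (Hmin (x, t)); apply/mem_set; split; rewrite /= in_itv /=;
  apply/andP; split; apply/RleP; lra.
Qed.
End RectangleMin.

Import RectangleMin.

(* Coquelicot's generic lemmas with the instances for [R] fixed, so that [apply] unifies them
   with [Rplus] and [Rmult]. *)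
Local Notation is_derive_Rplus := (is_derive_plus (K := R_AbsRing) (V := R_NormedModule)).
Local Notation is_derive_Rmult := (is_derive_mult (K := R_AbsRing)).
Local Notation is_derive_Rcomp := (is_derive_comp (K := R_AbsRing) (V := R_NormedModule)).
Local Notation is_derive_Rconst := (is_derive_const (K := R_AbsRing) (V := R_NormedModule)).
Local Notation ex_derive_Rcontinuous :=
  (ex_derive_continuous (K := R_AbsRing) (V := R_NormedModule)).
Local Notation ex_RInt_Rcontinuous := (ex_RInt_continuous (V := R_CompleteNormedModule)).

Lemma is_derive_continuity_pt (f : R -> R) x l : is_derive f x l -> continuity_pt f x.
Proof.
  intros Hf. apply continuity_pt_filterlim, ex_derive_Rcontinuous. now exists l.
Qed.

Lemma continuity_2d_pt_of_time (f : R -> R) x t :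
  continuity_pt f t -> continuity_2d_pt (fun _ s => f s) x t.
Proof.
  intros Hf. apply (continuity_1d_2d_pt_comp f (fun _ s => s)); auto.
  apply continuity_2d_pt_id2.
Qed.

Lemma continuity_2d_pt_of_space (f : R -> R) x t :
  continuity_pt f x -> continuity_2d_pt (fun y _ => f y) x t.
Proof.
  intros Hf. apply (continuity_1d_2d_pt_comp f (fun y _ => y)); auto.
  apply continuity_2d_pt_id1.
Qed.

Definition smooth_with (phi Dt Dx Dxx : R -> R -> R) : Prop :=
  forall x t,
    is_derive (fun s => phi x s) t (Dt x t) /\
    is_derive (fun y => phi y t) x (Dx x t) /\
    is_derive (fun y => Dx y t) x (Dxx x t) /\
    continuity_2d_pt phi x t /\ continuity_2d_pt Dt x t /\
    continuity_2d_pt Dx x t /\ continuity_2d_pt Dxx x t.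

Section SmoothWith.
Variables phi Dt Dx Dxx : R -> R -> R.
Hypothesis Hphi : smooth_with phi Dt Dx Dxx.

Lemma smooth_with_derivs x t :
  pt phi x t = Dt x t /\ px phi x t = Dx x t /\ pxx phi x t = Dxx x t.
Proof.
  destruct (Hphi x t) as (Ht & Hx & Hxx & _).
  unfold pt, px, pxx. split; [|split]; try now apply is_derive_unique.
  rewrite (Derive_ext _ (fun y => Dx y t)); [now apply is_derive_unique|].
  intros y. apply is_derive_unique, Hphi.
Qed.

Lemma smooth_with_test_fn : test_fn phi.
Proof.
  assert (Cjoint : forall f, (forall x t, continuity_2d_pt f x t) -> forall x t, jcont f x t).
  { intros f Hf x t e He. destruct (Hf x t (mkposreal e He)) as [d Hd].
    exists d. split; [apply cond_pos | exact Hd]. }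
  intros x t. destruct (Hphi x t) as (Ht & Hx & Hxx & _).
  split; [now exists (Dt x t)|]. split; [now exists (Dx x t)|]. split.
  { exists (Dxx x t). apply (is_derive_ext (fun y => Dx y t)); auto.
    intros y. symmetry. apply is_derive_unique, Hphi. }
  split; [apply Cjoint; apply Hphi|].
  split; [|split]; apply Cjoint; intros y s; destruct (Hphi y s) as (_ & _ & _ & _ & C).
  - apply (continuity_2d_pt_ext Dt); [|apply C].
    intros; symmetry; apply smooth_with_derivs.
  - apply (continuity_2d_pt_ext Dx); [|apply C].
    intros; symmetry; apply smooth_with_derivs.
  - apply (continuity_2d_pt_ext Dxx); [|apply C].
    intros; symmetry; apply smooth_with_derivs.
Qed.

End SmoothWith.

Lemma smooth_with_lin a b f Ft Fx Fxx g Gt Gx Gxx :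
  smooth_with f Ft Fx Fxx -> smooth_with g Gt Gx Gxx ->
  smooth_with (fun x t => a * f x t + b * g x t) (fun x t => a * Ft x t + b * Gt x t)
    (fun x t => a * Fx x t + b * Gx x t) (fun x t => a * Fxx x t + b * Gxx x t).
Proof.
  intros Hf Hg x t.
  destruct (Hf x t) as (F1 & F2 & F3 & F4 & F5 & F6 & F7).
  destruct (Hg x t) as (G1 & G2 & G3 & G4 & G5 & G6 & G7).
  split; [|split; [|split]]; try (apply is_derive_Rplus; now apply is_derive_scal).
  split; [|split; [|split]]; apply continuity_2d_pt_plus;
    apply continuity_2d_pt_mult; auto; apply continuity_2d_pt_const.
Qed.

Lemma smooth_with_sep (p p' q q' q'' r r' : R -> R) :
  (forall t, is_derive p t (p' t)) -> (forall t, is_derive r t (r' t)) ->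
  (forall x, is_derive q x (q' x)) -> (forall x, is_derive q' x (q'' x)) ->
  (forall t, continuous p' t) -> (forall t, continuous r' t) -> (forall x, continuous q'' x) ->
  smooth_with (fun x t => p t * q x + r t) (fun x t => p' t * q x + r' t)
    (fun x t => p t * q' x) (fun x t => p t * q'' x).
Proof.
  intros Hp Hr Hq Hq' Cp' Cr' Cq'' x t.
  assert (Cp := fun t => is_derive_continuity_pt _ _ _ (Hp t)).
  assert (Cr := fun t => is_derive_continuity_pt _ _ _ (Hr t)).
  assert (Cq := fun x => is_derive_continuity_pt _ _ _ (Hq x)).
  assert (Cq' := fun x => is_derive_continuity_pt _ _ _ (Hq' x)).
  assert (C1 := fun f x => continuity_pt_filterlim f x).
  split; [|split; [|split; [|split; [|split; [|split]]]]].
  - apply (is_derive_ext (fun s => p s * q x + r s)); [reflexivity|].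
    apply is_derive_Rplus; auto.
    replace (p' t * q x) with (p' t * q x + p t * 0) by ring.
    apply (is_derive_Rmult p (fun _ => q x)); [apply Hp|apply is_derive_Rconst|].
    intros; apply Rmult_comm.
  - replace (p t * q' x) with (p t * q' x + 0) by ring.
    apply is_derive_Rplus; [now apply is_derive_scal|apply is_derive_Rconst].
  - now apply is_derive_scal.
  - apply continuity_2d_pt_plus; [apply continuity_2d_pt_mult|].
    + apply (continuity_2d_pt_of_time p), Cp.
    + apply (continuity_2d_pt_of_space q), Cq.
    + apply (continuity_2d_pt_of_time r), Cr.
  - apply continuity_2d_pt_plus; [apply continuity_2d_pt_mult|].
    + apply (continuity_2d_pt_of_time p'), C1, Cp'.
    + apply (continuity_2d_pt_of_space q), Cq.
    + apply (continuity_2d_pt_of_time r'), C1, Cr'.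
  - apply continuity_2d_pt_mult.
    + apply (continuity_2d_pt_of_time p), Cp.
    + apply (continuity_2d_pt_of_space q'), Cq'.
  - apply continuity_2d_pt_mult.
    + apply (continuity_2d_pt_of_time p), Cp.
    + apply (continuity_2d_pt_of_space q''), C1, Cq''.
Qed.

Lemma exp_le_exp x y : x <= y -> exp x <= exp y.
Proof.
  intros [H|H]; [now apply Rlt_le, exp_increasing|subst; apply Rle_refl].
Qed.

Lemma exp_le1 x : x <= 0 -> exp x <= 1.
Proof. intros Hx. rewrite <- exp_0. now apply exp_le_exp. Qed.

Lemma cont_closed_halfplane_sub U phi :
  cont_closed_halfplane U -> (forall x t, continuity_2d_pt phi x t) ->
  cont_closed_halfplane (fun x t => U x t - phi x t).
Proof.
  intros HU Hphi x t Ht e He.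
  destruct (HU x t Ht (e / 2)) as [d1 [Hd1 H1]]; [lra|].
  destruct (Hphi x t (mkposreal (e / 2) ltac:(lra))) as [d2 H2].
  exists (Rmin d1 d2). split; [apply Rmin_pos; [lra|apply cond_pos]|].
  intros y s Hs Hy Hst.
  assert (A1 := H1 y s Hs (Rlt_le_trans _ _ _ Hy (Rmin_l _ _))
                 (Rlt_le_trans _ _ _ Hst (Rmin_l _ _))).
  assert (A2 := H2 y s (Rlt_le_trans _ _ _ Hy (Rmin_r _ _)) (Rlt_le_trans _ _ _ Hst (Rmin_r _ _))).
  simpl in A2.
  replace (U y s - phi y s - (U x t - phi x t))
    with ((U y s - U x t) - (phi y s - phi x t)) by ring.
  eapply Rle_lt_trans; [apply Rabs_triang|]. rewrite Rabs_Ropp. lra.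
Qed.

Lemma cont_closed_halfplane_opp U :
  cont_closed_halfplane U -> cont_closed_halfplane (fun x t => - U x t).
Proof.
  intros HU x t Ht e He. destruct (HU x t Ht e He) as [d [Hd H]].
  exists d. split; [exact Hd|]. intros y s Hs Hy Hst.
  replace (- U y s - - U x t) with (- (U y s - U x t)) by ring.
  rewrite Rabs_Ropp. now apply H.
Qed.

Definition local_min_pos (Phi : R -> R -> R) (x0 t0 : R) : Prop :=
  exists d, 0 < d /\ forall x t, 0 < t -> Rabs (x - x0) < d -> Rabs (t - t0) < d ->
    Phi x0 t0 <= Phi x t.

Lemma strip_interior_min (Phi : R -> R -> R) (T R0 x1 t1 : R) :
  cont_closed_halfplane Phi -> 0 <= R0 ->
  (forall x t, 0 <= t <= T -> R0 <= Rabs x -> 0 <= Phi x t) ->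
  0 <= t1 <= T -> Phi x1 t1 < 0 ->
  (forall x, Phi x1 t1 < Phi x 0) -> (forall x, Phi x1 t1 < Phi x T) ->
  exists x0 t0, 0 < t0 < T /\ local_min_pos Phi x0 t0.
Proof.
  intros HPhi HR0 Hfar Ht1 Hneg Hinit Hfinal.
  assert (Hx1 : Rabs x1 <= R0).
  { destruct (Rle_or_lt (Rabs x1) R0) as [|H]; [easy|].
    specialize (Hfar x1 t1 Ht1 (Rlt_le _ _ H)). lra. }
  destruct (rectangle_min Phi (- R0) R0 0 T) as (x0 & t0 & _ & Ht0 & Hmin); try lra.
  { intros x t _ Ht e He. destruct (HPhi x t (proj1 Ht) e He) as [d [Hd H]].
    exists d. split; [exact Hd|]. intros y s _ Hs. now apply H. }
  assert (Hglobal : forall x t, 0 <= t <= T -> Phi x0 t0 <= Phi x t).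
  { intros x t Ht. destruct (Rle_or_lt (Rabs x) R0) as [Hx|Hx].
    - apply Rabs_le_between in Hx. now apply Hmin.
    - specialize (Hmin x1 t1 (proj1 (Rabs_le_between _ _) Hx1) Ht1).
      specialize (Hfar x t Ht (Rlt_le _ _ Hx)). lra. }
  assert (Hle1 := Hglobal x1 t1 Ht1).
  assert (Ht0' : 0 < t0 < T).
  { specialize (Hinit x0). specialize (Hfinal x0).
    split; [destruct (Rle_lt_or_eq_dec 0 t0 (proj1 Ht0))
           |destruct (Rle_lt_or_eq_dec t0 T (proj2 Ht0))];
      try easy; subst; lra. }
  exists x0, t0. split; [exact Ht0'|].
  exists (T - t0). split; [lra|]. intros x t Ht _ Htt. apply Hglobal.
  apply Rabs_def2 in Htt. lra.
Qed.

Lemma quad_ge_abs (a K x : R) : 0 < a -> - (K * K / (4 * a)) <= a * (x * x) - K * Rabs x.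
Proof.
  intros Ha.
  assert (Ex : x * x = Rabs x * Rabs x) by (rewrite <- Rabs_mult; apply eq_sym, Rabs_pos_eq; nra).
  assert (a * (x * x) - K * Rabs x + K * K / (4 * a)
          = a * ((Rabs x - K / (2 * a)) * (Rabs x - K / (2 * a)))) by (rewrite Ex; field; lra).
  assert (0 <= a * ((Rabs x - K / (2 * a)) * (Rabs x - K / (2 * a)))).
  { apply Rmult_le_pos; [lra|]. apply Rle_0_sqr. }
  lra.
Qed.

(* The penalty pushes minima of [U - (1 - g) v + penalty] away from [|x| = oo] (quadratic term)
   and from the final time [T] (exponential term with [la] large); the term [c t] makes the
   test function a strict sub/supersolution. *)
Definition penalty (g c T be la x t : R) : R :=
  g * exp (t - T) / 2 * (x * x) + (g * c * t + be * exp (la * (t - T + 1))).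

Lemma smooth_with_penalty g c T be la :
  smooth_with (penalty g c T be la)
    (fun x t => g * exp (t - T) / 2 * (x * x) + (g * c + be * (la * exp (la * (t - T + 1)))))
    (fun x t => g * exp (t - T) / 2 * (2 * x)) (fun x t => g * exp (t - T) / 2 * 2).
Proof.
  apply smooth_with_sep; intros;
    try (auto_derive; [easy|]; unfold Rminus, Rdiv; ring);
    apply ex_derive_Rcontinuous; auto_derive; easy.
Qed.

Definition penalized (U v : R -> R -> R) (g c T be la x t : R) : R :=
  U x t - ((1 - g) * v x t - penalty g c T be la x t).

Section Penalization.
Variables (U v : R -> R -> R) (c K T g be la : R).
Hypotheses (c_ge0 : 0 <= c) (K_ge0 : 0 <= K) (T_ge0 : 0 <= T).
Hypotheses (g_gt0 : 0 < g) (g_le1 : g <= 1) (be_gt0 : 0 < be).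
Hypothesis U_lb : forall x t, 0 <= t <= T -> - (K * (1 + Rabs x)) <= U x t.
Hypothesis v_ub : forall x t, 0 <= t <= T -> v x t <= K * (1 + Rabs x).

Let q := exp (- T) / 2.
Let Phi := penalized U v g c T be la.

Lemma penalized_lb x t : 0 <= t <= T ->
  - (2 * K * (1 + Rabs x)) + g * q * (x * x) + be * exp (la * (t - T + 1)) <= Phi x t.
Proof.
  intros Ht. unfold Phi, penalized, penalty, q.
  specialize (U_lb x t Ht). specialize (v_ub x t Ht).
  assert (exp (- T) <= exp (t - T)) by (apply exp_le_exp; lra).
  assert (0 <= K * (1 + Rabs x)) by (apply Rmult_le_pos; [|pose proof (Rabs_pos x)]; lra).
  assert ((1 - g) * v x t <= K * (1 + Rabs x)) by (destruct (Rle_or_lt 0 (v x t)); nra).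
  assert (0 <= g * (x * x) * (exp (t - T) - exp (- T))) by (apply Rmult_le_pos; nra).
  assert (0 <= g * c * t) by (apply Rmult_le_pos; nra).
  nra.
Qed.

Lemma penalized_coercive : 0 < K ->
  exists R0, 0 <= R0 /\ forall x t, 0 <= t <= T -> R0 <= Rabs x -> 0 <= Phi x t.
Proof.
  intros HK. assert (Hq : 0 < q) by (unfold q; pose proof (exp_pos (- T)); lra).
  assert (Hgq : 0 < g * q) by nra.
  exists (1 + 4 * K / (g * q)).
  assert (0 <= 4 * K / (g * q)) by (apply Rle_mult_inv_pos; lra).
  split; [lra|]. intros x t Ht Hx.
  assert (H4K : 4 * K <= g * q * Rabs x).
  { apply Rle_trans with (g * q * (4 * K / (g * q))); [right; field; lra|].
    apply Rmult_le_compat_l; lra. }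
  pose proof (penalized_lb x t Ht). pose proof (exp_pos (la * (t - T + 1))).
  assert (Ex : x * x = Rabs x * Rabs x) by (rewrite <- Rabs_mult; apply eq_sym, Rabs_pos_eq; nra).
  rewrite Ex in H0. nra.
Qed.

Lemma penalized_final x : 2 * K + K * K / (g * q) < be * exp la -> 0 < Phi x T.
Proof.
  intros Hla. pose proof (penalized_lb x T (conj T_ge0 (Rle_refl T))).
  assert (Hq : 0 < q) by (unfold q; pose proof (exp_pos (- T)); lra).
  pose proof (quad_ge_abs (g * q) (2 * K) x ltac:(nra)).
  replace (la * (T - T + 1)) with la in H by ring.
  assert (2 * K * (2 * K) / (4 * (g * q)) = K * K / (g * q)) by (field; lra).
  lra.
Qed.

Lemma penalized_initial x : (forall x, v x 0 <= U x 0) -> - (g * (K + K * K / (4 * q))) <= Phi x 0.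
Proof.
  intros H0. unfold Phi, penalized, penalty.
  specialize (U_lb x 0 (conj (Rle_refl 0) T_ge0)). specialize (H0 x).
  assert (Hq : 0 < q) by (unfold q; pose proof (exp_pos (- T)); lra).
  pose proof (quad_ge_abs q K x Hq).
  pose proof (exp_pos (la * (0 - T + 1))).
  assert (E : g * exp (0 - T) / 2 * (x * x) = g * (q * (x * x)))
    by (unfold q; replace (0 - T) with (- T) by ring; field).
  assert (0 <= (1 - g) * (U x 0 - v x 0)) by (apply Rmult_le_pos; lra).
  assert (- (g * (K * (1 + Rabs x))) <= g * U x 0) by (apply Ropp_le_cancel; nra).
  assert (g * (- (K * K / (4 * q))) <= g * (q * (x * x) - K * Rabs x))
    by (apply Rmult_le_compat_l; lra).
  rewrite E. nra.
Qed.
End Penalization.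

Lemma penalization_parameters (th K q A : R) : 0 < th -> 0 < K -> 0 < q ->
  exists g be la, 0 < g <= 1 / 2 /\ 0 < be /\ 0 < la /\
    g * (K + K * K / (4 * q)) <= th / 4 /\ g * A + be <= th / 2 /\
    2 * K + K * K / (g * q) < be * exp la.
Proof.
  intros Hth HK Hq.
  set (C0 := K + K * K / (4 * q)).
  assert (HC0 : 0 < C0).
  { assert (0 <= K * K / (4 * q)) by (apply Rle_mult_inv_pos; nra). unfold C0; lra. }
  set (g := Rmin (1 / 2) (th / (4 * (C0 + Rabs A + 1)))).
  assert (Hg : 0 < g <= 1 / 2).
  { split; [apply Rmin_pos; [lra|]|apply Rmin_l].
    apply Rdiv_lt_0_compat; [|pose proof (Rabs_pos A)]; lra. }
  assert (HgA : g * (C0 + Rabs A + 1) <= th / 4).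
  { assert (Hg' : g <= th / (4 * (C0 + Rabs A + 1))) by apply Rmin_r.
    pose proof (Rabs_pos A).
    apply Rmult_le_compat_r with (r := C0 + Rabs A + 1) in Hg'; [|lra].
    replace (th / (4 * (C0 + Rabs A + 1)) * (C0 + Rabs A + 1)) with (th / 4) in Hg'
      by (field; lra). exact Hg'. }
  set (C1 := 2 * K + K * K / (g * q)).
  assert (HC1 : 0 < C1).
  { assert (0 <= K * K / (g * q)) by (apply Rle_mult_inv_pos; nra). unfold C1; lra. }
  exists g, (th / 4), (C1 / (th / 4)).
  assert (Hla : 0 < C1 / (th / 4)) by (apply Rdiv_lt_0_compat; lra).
  pose proof (Rle_abs A). pose proof (Rabs_pos A).
  repeat split; try lra; try nra.
  assert (th / 4 * (1 + C1 / (th / 4)) <= th / 4 * exp (C1 / (th / 4)))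
    by (apply Rmult_le_compat_l; [lra|apply exp_ineq1_le]).
  assert (th / 4 * (1 + C1 / (th / 4)) = th / 4 + C1) by (field; lra).
  fold C1. lra.
Qed.

Lemma comparison_by_penalization (U v : R -> R -> R) (c : R) :
  0 <= c -> cont_closed_halfplane U -> (forall x t, continuity_2d_pt v x t) ->
  (forall T, 0 < T -> exists K, 0 < K /\ forall x t, 0 <= t <= T ->
     - (K * (1 + Rabs x)) <= U x t /\ v x t <= K * (1 + Rabs x)) ->
  (forall x, v x 0 <= U x 0) ->
  (forall g T be la x0 t0, 0 < g <= 1 / 2 -> 0 < be -> 0 < la -> 0 < t0 < T ->
     ~ local_min_pos (penalized U v g c T be la) x0 t0) ->
  forall x t, 0 <= t -> v x t <= U x t.
Proof.
  intros Hc HU Hv Hgrowth H0 Hno x1 t1 Ht1.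
  destruct (Rle_lt_or_eq_dec 0 t1 Ht1) as [Ht1p|E]; [|subst; apply H0].
  destruct (Rle_or_lt (v x1 t1) (U x1 t1)) as [|Hlt]; [easy|exfalso].
  set (T := t1 + 1). set (q := exp (- T) / 2).
  assert (Hq : 0 < q) by (unfold q; pose proof (exp_pos (- T)); lra).
  destruct (Hgrowth T) as (K & HK & Hbounds); [unfold T; lra|].
  assert (U_lb : forall x t, 0 <= t <= T -> - (K * (1 + Rabs x)) <= U x t) by apply Hbounds.
  assert (v_ub : forall x t, 0 <= t <= T -> v x t <= K * (1 + Rabs x)) by apply Hbounds.
  destruct (penalization_parameters (v x1 t1 - U x1 t1) K q
              (v x1 t1 + (exp (t1 - T) / 2 * (x1 * x1) + c * t1)))
    as (g & be & la & Hg & Hbe & Hla & Hsmall0 & Hsmall1 & Hbig); try lra.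
  set (Phi := penalized U v g c T be la).
  assert (Hstart : Phi x1 t1 <= - ((v x1 t1 - U x1 t1) / 2)).
  { unfold Phi, penalized, penalty.
    replace (la * (t1 - T + 1)) with 0 by (unfold T; ring). rewrite exp_0. nra. }
  assert (Hinit : forall x, Phi x1 t1 < Phi x 0).
  { intros x. assert (- (g * (K + K * K / (4 * q))) <= Phi x 0).
    { apply penalized_initial; auto; unfold T in *; lra. }
    lra. }
  assert (Hfinal : forall x, Phi x1 t1 < Phi x T).
  { intros x. assert (0 < Phi x T)
      by (apply penalized_final with (K := K); auto; unfold T in *; lra).
    lra. }
  destruct (penalized_coercive U v c K T g be la) as (R0 & HR0 & Hfar); auto; try (unfold T; lra).
  assert (Hcont : cont_closed_halfplane Phi).
  { apply (cont_closed_halfplane_sub U (fun x t => (1 - g) * v x t - penalty g c T be la x t));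
      auto.
    intros x t. apply continuity_2d_pt_minus.
    - apply continuity_2d_pt_mult; [apply continuity_2d_pt_const|apply Hv].
    - apply (smooth_with_penalty g c T be la x t). }
  destruct (strip_interior_min Phi T R0 x1 t1) as (x0 & t0 & Ht0 & Hmin); auto; try (unfold T; lra).
  now apply (Hno g T be la x0 t0).
Qed.

Lemma linear_growth_opp U : linear_growth U -> linear_growth (fun x t => - U x t).
Proof.
  intros HU T HT. destruct (HU T HT) as (K & HK & H).
  exists K. split; [exact HK|]. intros x t Ht. rewrite Rabs_Ropp. now apply H.
Qed.

Lemma linear_growth_bounds U v : linear_growth U ->
  (forall T, 0 < T -> exists K, forall x t, 0 <= t <= T -> v x t <= K * (1 + Rabs x)) ->
  forall T, 0 < T -> exists K, 0 < K /\ forall x t, 0 <= t <= T ->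
    - (K * (1 + Rabs x)) <= U x t /\ v x t <= K * (1 + Rabs x).
Proof.
  intros HU Hv T HT.
  destruct (HU T HT) as (KU & HKU & HU'). destruct (Hv T HT) as (Kv & Hv').
  exists (KU + Rabs Kv). split; [pose proof (Rabs_pos Kv); lra|].
  intros x t Ht. specialize (HU' x t Ht). specialize (Hv' x t Ht).
  pose proof (Rabs_pos x). pose proof (Rle_abs Kv). pose proof (Rabs_pos Kv).
  apply Rabs_le_between in HU'. split; nra.
Qed.

Lemma Fq_eq p : Fq p = p * p / 2.
Proof. unfold Fq. rewrite pow2_abs. simpl. field. Qed.

Lemma Fq_convex (g a b : R) : 0 <= g <= 1 ->
  Fq ((1 - g) * a + g * b) <= (1 - g) * Fq a + g * Fq b.
Proof.
  intros Hg. rewrite !Fq_eq.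
  assert (0 <= g * (1 - g) * ((a - b) * (a - b))) by (apply Rmult_le_pos; [nra|apply Rle_0_sqr]).
  nra.
Qed.

Lemma Fq_ge_mix (g a b : R) : 0 <= g <= 1 -> Rabs a <= 1 ->
  (1 - g) * Fq a - g / 2 - g * Rabs b <= Fq ((1 - g) * a + g * b).
Proof.
  intros Hg Ha. rewrite !Fq_eq. pose proof (Rabs_pos a). pose proof (Rabs_pos b).
  assert (Haa : a * a <= 1).
  { rewrite <- (Rabs_pos_eq (a * a)) by nra. rewrite Rabs_mult. nra. }
  assert (Hab : - Rabs b <= a * b).
  { assert (Hab : Rabs (a * b) <= Rabs b) by (rewrite Rabs_mult; nra).
    apply Rabs_le_between in Hab. lra. }
  assert (0 <= g * (1 - g) * (1 - a * a)) by (apply Rmult_le_pos; nra).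
  assert ((1 - g) * (g * (- Rabs b)) <= (1 - g) * (g * (a * b))) by (apply Rmult_le_compat_l; nra).
  nra.
Qed.

(* Convexity of [Fq] absorbs the gradient of the penalty. *)
Lemma penalized_residual_neg (eps g k x a Dt Dxx f' : R) :
  0 <= eps -> 0 < g <= 1 / 2 -> 0 < k <= 1 -> 0 <= f' -> Dt + Fq a - eps * Dxx <= 0 ->
  (1 - g) * Dt + -1 * (g * k / 2 * (x * x) + (g * (1 + eps) + f'))
  + Fq ((1 - g) * a + -1 * (g * k / 2 * (2 * x)))
  - eps * ((1 - g) * Dxx + -1 * (g * k / 2 * 2)) < 0.
Proof.
  intros Heps Hg Hk Hf Hsub.
  assert (Hconv : Fq ((1 - g) * a + -1 * (g * k / 2 * (2 * x)))
                  <= (1 - g) * Fq a + g * Fq (- (k * x))).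
  { replace ((1 - g) * a + -1 * (g * k / 2 * (2 * x))) with ((1 - g) * a + g * (- (k * x)))
      by field.
    apply Fq_convex. lra. }
  rewrite (Fq_eq (- (k * x))) in Hconv.
  assert (0 <= g * ((k - k * k) * (x * x))) by (apply Rmult_le_pos; [lra|apply Rmult_le_pos; nra]).
  assert ((1 - g) * (Dt + Fq a - eps * Dxx) <= 0) by (apply Rmult_le_0_l; lra).
  assert (g * (eps * (1 - k)) >= 0) by (apply Rle_ge, Rmult_le_pos; nra).
  nra.
Qed.

(* Here [|a| <= 1] controls the cross term of [Fq], which [c = 2 + eps] absorbs. *)
Lemma penalized_residual_pos (eps g k x a Dt Dxx f' : R) :
  0 <= eps -> 0 < g <= 1 / 2 -> 0 < k <= 1 -> 0 <= f' -> Rabs a <= 1 ->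
  0 <= Dt + Fq a - eps * Dxx ->
  0 < (1 - g) * Dt + 1 * (g * k / 2 * (x * x) + (g * (2 + eps) + f'))
      + Fq ((1 - g) * a + 1 * (g * k / 2 * (2 * x)))
      - eps * ((1 - g) * Dxx + 1 * (g * k / 2 * 2)).
Proof.
  intros Heps Hg Hk Hf Ha Hsuper.
  assert (Hmix : (1 - g) * Fq a - g / 2 - g * Rabs (k * x)
                 <= Fq ((1 - g) * a + 1 * (g * k / 2 * (2 * x)))).
  { replace ((1 - g) * a + 1 * (g * k / 2 * (2 * x))) with ((1 - g) * a + g * (k * x)) by field.
    apply Fq_ge_mix; lra. }
  rewrite Rabs_mult, (Rabs_pos_eq k) in Hmix by lra.
  assert (0 <= (1 - g) * (Dt + Fq a - eps * Dxx)) by (apply Rmult_le_pos; lra).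
  assert (Hsq : - (1 / 2) <= x * x / 2 - Rabs x).
  { assert (Ex : x * x = Rabs x * Rabs x) by (rewrite <- Rabs_mult; apply eq_sym, Rabs_pos_eq; nra).
    rewrite Ex. pose proof (Rle_0_sqr (Rabs x - 1)). unfold Rsqr in *. lra. }
  assert (g * k * (- (1 / 2)) <= g * k * (x * x / 2 - Rabs x)) by (apply Rmult_le_compat_l; nra).
  assert (g * (eps * (1 - k)) >= 0) by (apply Rle_ge, Rmult_le_pos; nra).
  nra.
Qed.

Lemma penalty_time_slope_pos be la t T : 0 < be -> 0 < la ->
  0 <= be * (la * exp (la * (t - T + 1))).
Proof.
  intros Hbe Hla. apply Rmult_le_pos; [lra|apply Rmult_le_pos; [lra|apply Rlt_le, exp_pos]].
Qed.

Lemma subsolution_le_visc_super eps U v Dt Dx Dxx :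
  0 <= eps -> cont_closed_halfplane U -> linear_growth U -> visc_super Fq eps U ->
  smooth_with v Dt Dx Dxx ->
  (forall x t, 0 < t -> Dt x t + Fq (Dx x t) - eps * Dxx x t <= 0) ->
  (forall T, 0 < T -> exists K, forall x t, 0 <= t <= T -> v x t <= K * (1 + Rabs x)) ->
  (forall x, v x 0 <= U x 0) ->
  forall x t, 0 <= t -> v x t <= U x t.
Proof.
  intros Heps HU HUg HUs Hv Hsub Hvg H0.
  apply (comparison_by_penalization U v (1 + eps)); auto; try lra.
  { intros x t. apply Hv. }
  { now apply linear_growth_bounds. }
  intros g T be la x0 t0 Hg Hbe Hla Ht0 [d [Hd Hmin]].
  set (phi := fun x t => (1 - g) * v x t + -1 * penalty g (1 + eps) T be la x t).
  assert (Hphi := smooth_with_lin (1 - g) (-1) _ _ _ _ _ _ _ _ Hv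
                   (smooth_with_penalty g (1 + eps) T be la)).
  assert (Hvisc : pt phi x0 t0 + Fq (px phi x0 t0) - eps * pxx phi x0 t0 >= 0).
  { apply HUs; [exact (smooth_with_test_fn _ _ _ _ Hphi)|lra|].
    exists d. split; [exact Hd|]. intros x t Ht Hx Htt.
    specialize (Hmin x t Ht Hx Htt). unfold penalized in Hmin. unfold phi. lra. }
  destruct (smooth_with_derivs _ _ _ _ Hphi x0 t0) as (E1 & E2 & E3).
  unfold phi in Hvisc. rewrite E1, E2, E3 in Hvisc.
  apply (Rlt_not_ge _ _ (penalized_residual_neg eps g (exp (t0 - T)) x0 (Dx x0 t0) (Dt x0 t0)
    (Dxx x0 t0) _ Heps Hg ltac:(split; [apply exp_pos|apply exp_le1; lra])
    (penalty_time_slope_pos be la t0 T Hbe Hla) (Hsub x0 t0 (proj1 Ht0)))), Hvisc.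
Qed.

Lemma visc_sub_le_supersolution eps U v Dt Dx Dxx :
  0 <= eps -> cont_closed_halfplane U -> linear_growth U -> visc_sub Fq eps U ->
  smooth_with v Dt Dx Dxx ->
  (forall x t, 0 < t -> 0 <= Dt x t + Fq (Dx x t) - eps * Dxx x t) ->
  (forall x t, 0 < t -> Rabs (Dx x t) <= 1) ->
  (forall T, 0 < T -> exists K, forall x t, 0 <= t <= T -> - (K * (1 + Rabs x)) <= v x t) ->
  (forall x, U x 0 <= v x 0) ->
  forall x t, 0 <= t -> U x t <= v x t.
Proof.
  intros Heps HU HUg HUs Hv Hsuper Hgrad Hvg H0 x t Ht.
  apply Ropp_le_cancel. revert x t Ht.
  apply (comparison_by_penalization (fun x t => - U x t) (fun x t => - v x t) (2 + eps));
    auto using cont_closed_halfplane_opp; try lra.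
  { intros x t. apply continuity_2d_pt_opp, Hv. }
  { apply linear_growth_bounds; [now apply linear_growth_opp|].
    intros T HT. destruct (Hvg T HT) as [K HK]. exists K. intros x t Ht.
    specialize (HK x t Ht). lra. }
  { intros x. specialize (H0 x). lra. }
  intros g T be la x0 t0 Hg Hbe Hla Ht0 [d [Hd Hmin]].
  set (phi := fun x t => (1 - g) * v x t + 1 * penalty g (2 + eps) T be la x t).
  assert (Hphi := smooth_with_lin (1 - g) 1 _ _ _ _ _ _ _ _ Hv
                   (smooth_with_penalty g (2 + eps) T be la)).
  assert (Hvisc : pt phi x0 t0 + Fq (px phi x0 t0) - eps * pxx phi x0 t0 <= 0).
  { apply HUs; [exact (smooth_with_test_fn _ _ _ _ Hphi)|lra|].
    exists d. split; [exact Hd|]. intros x t Ht Hx Htt.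
    specialize (Hmin x t Ht Hx Htt). unfold penalized in Hmin. unfold phi. lra. }
  destruct (smooth_with_derivs _ _ _ _ Hphi x0 t0) as (E1 & E2 & E3).
  unfold phi in Hvisc. rewrite E1, E2, E3 in Hvisc.
  apply (Rle_not_lt _ _ Hvisc).
  apply (penalized_residual_pos eps g (exp (t0 - T)) x0 (Dx x0 t0)); auto.
  - split; [apply exp_pos|apply exp_le1; lra].
  - now apply penalty_time_slope_pos.
  - apply Hgrad, Ht0.
  - apply Hsuper, Ht0.
Qed.

Definition gauss (s : R) : R := exp (- (s * s)).
Definition gauss_int (y : R) : R := RInt gauss 0 y.
Definition gauss_aux (y : R) : R :=
  RInt (fun t => exp (- (y * y) * (1 + t * t)) / (1 + t * t)) 0 1.

Lemma ex_RInt_gauss a b : ex_RInt gauss a b.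
Proof.
  apply ex_RInt_Rcontinuous. intros z _.
  apply ex_derive_Rcontinuous. unfold gauss. auto_derive. easy.
Qed.

Lemma is_derive_gauss_int y : is_derive gauss_int y (gauss y).
Proof.
  apply (is_derive_RInt (V := R_CompleteNormedModule) gauss gauss_int 0).
  - apply filter_forall. intros b.
    apply (RInt_correct (V := R_CompleteNormedModule)), ex_RInt_gauss.
  - apply ex_derive_Rcontinuous. unfold gauss. auto_derive. easy.
Qed.

Lemma gauss_int_0 : gauss_int 0 = 0.
Proof. apply (RInt_point (V := R_CompleteNormedModule)). Qed.

Lemma gauss_int_scale y : y * RInt (fun t => gauss (y * t)) 0 1 = gauss_int y.
Proof.
  unfold gauss_int.
  assert (E := RInt_comp_lin (V := R_CompleteNormedModule) gauss y 0 0 1).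
  replace (y * 0 + 0) with 0 in E by ring. replace (y * 1 + 0) with y in E by ring.
  rewrite <- E by apply ex_RInt_gauss. clear E.
  rewrite <- (RInt_scal (V := R_CompleteNormedModule)).
  - apply RInt_ext. intros t _. unfold scal; simpl; unfold mult; simpl. now rewrite Rplus_0_r.
  - apply ex_RInt_Rcontinuous. intros z _.
    apply ex_derive_Rcontinuous. unfold gauss. auto_derive. easy.
Qed.

Lemma is_derive_gauss_aux y : is_derive gauss_aux y (-2 * gauss y * gauss_int y).
Proof.
  set (f := fun u t => exp (- (u * u) * (1 + t * t)) / (1 + t * t)).
  assert (Hpos : forall t, 0 < 1 + t * t) by (intros; nra).
  assert (Hf : forall u t, is_derive (fun u => f u t) u (-2 * u * exp (- (u * u) * (1 + t * t)))).
  { intros u t. unfold f. auto_derive; [specialize (Hpos t); lra|].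
    field. specialize (Hpos t); lra. }
  assert (Hf' : forall u t, Derive (fun u => f u t) u = -2 * u * exp (- (u * u) * (1 + t * t)))
    by (intros; apply is_derive_unique, Hf).
  unfold gauss_aux. fold f.
  replace (-2 * gauss y * gauss_int y) with (RInt (fun t => Derive (fun u => f u t) y) 0 1).
  - apply is_derive_RInt_param.
    + apply filter_forall. intros u t _. eexists. apply Hf.
    + intros t _. apply (continuity_2d_pt_ext (fun u v => -2 * u * exp (- (u * u) * (1 + v * v)))).
      { intros; symmetry; apply Hf'. }
      apply continuity_2d_pt_mult.
      * apply continuity_2d_pt_mult; [apply continuity_2d_pt_const|apply continuity_2d_pt_id1].
      * apply (continuity_1d_2d_pt_comp exp (fun u v => - (u * u) * (1 + v * v))).
        { apply derivable_continuous_pt, derivable_pt_exp. }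
        apply continuity_2d_pt_mult.
        { apply continuity_2d_pt_opp, continuity_2d_pt_mult; apply continuity_2d_pt_id1. }
        apply continuity_2d_pt_plus; [apply continuity_2d_pt_const|].
        apply continuity_2d_pt_mult; apply continuity_2d_pt_id2.
    + apply filter_forall. intros u. apply ex_RInt_Rcontinuous. intros z _.
      apply ex_derive_Rcontinuous. unfold f. auto_derive. specialize (Hpos z). lra.
  - rewrite <- gauss_int_scale.
    rewrite (RInt_ext _ (fun t => (-2 * y * gauss y) * gauss (y * t))).
    + rewrite (RInt_scal (V := R_CompleteNormedModule)).
      * unfold scal; simpl; unfold mult; simpl. ring.
      * apply ex_RInt_Rcontinuous. intros z _.
        apply ex_derive_Rcontinuous. unfold gauss. auto_derive. easy.
    + intros t _. rewrite Hf'. unfold gauss.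
      rewrite (Rmult_assoc (-2 * y)), <- exp_plus. do 2 f_equal. ring.
Qed.

Lemma gauss_aux_0 : gauss_aux 0 = PI / 4.
Proof.
  unfold gauss_aux.
  rewrite (RInt_ext _ (fun t => / (1 + t ^ 2))).
  2:{ intros t _. replace (- (0 * 0) * (1 + t * t)) with 0 by ring. rewrite exp_0. simpl.
      field. nra. }
  rewrite <- atan_1.
  replace (atan 1) with (minus (atan 1) (atan 0)).
  2:{ rewrite atan_0. unfold minus, plus, opp; simpl. ring. }
  apply is_RInt_unique, (is_RInt_derive (V := R_CompleteNormedModule)).
  - intros x _. apply is_derive_Reals, derivable_pt_lim_atan.
  - intros x _. apply ex_derive_Rcontinuous. auto_derive. nra.
Qed.

(* Differentiating under the integral sign shows that [gauss_int y ^ 2 + gauss_aux y] is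
   constant; this is the classical route to [gauss_int (+oo) = sqrt PI / 2]. *)
Lemma gauss_int_sqr_add_aux y : gauss_int y * gauss_int y + gauss_aux y = PI / 4.
Proof.
  set (h := fun z => gauss_int z * gauss_int z + gauss_aux z).
  assert (Hh : forall z, is_derive h z 0).
  { intros z. unfold h.
    replace 0 with (gauss z * gauss_int z + gauss_int z * gauss z + -2 * gauss z * gauss_int z)
      by ring.
    apply is_derive_Rplus; [|apply is_derive_gauss_aux].
    apply is_derive_Rmult; [apply is_derive_gauss_int|apply is_derive_gauss_int|].
    intros; apply Rmult_comm. }
  replace (PI / 4) with (h 0) by (unfold h; rewrite gauss_int_0, gauss_aux_0; ring).
  change (h y = h 0).
  destruct (MVT_gen h 0 y (fun _ => 0)) as [c [_ Hc]].
  - intros x _. apply Hh.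
  - intros x _. apply continuity_pt_filterlim, ex_derive_Rcontinuous. eexists. apply Hh.
  - lra.
Qed.

Lemma gauss_aux_bounds y : 0 <= gauss_aux y <= exp (- (y * y)).
Proof.
  assert (Hpos : forall t, 0 < 1 + t * t) by (intros; nra).
  assert (Hex : ex_RInt (fun t => exp (- (y * y) * (1 + t * t)) / (1 + t * t)) 0 1).
  { apply ex_RInt_Rcontinuous. intros z _.
    apply ex_derive_Rcontinuous. auto_derive. specialize (Hpos z). lra. }
  unfold gauss_aux. split.
  - apply RInt_ge_0; [lra|exact Hex|]. intros t _.
    apply Rlt_le, Rdiv_lt_0_compat; [apply exp_pos|apply Hpos].
  - replace (exp (- (y * y))) with (RInt (fun _ => exp (- (y * y))) 0 1)
      by (rewrite RInt_const; unfold scal; simpl; unfold mult; simpl; ring).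
    apply RInt_le; [lra|exact Hex|apply ex_RInt_const|].
    intros t _. specialize (Hpos t).
    assert (exp (- (y * y) * (1 + t * t)) <= exp (- (y * y))).
    { apply exp_le_exp. assert (0 <= y * y * (t * t)) by (apply Rmult_le_pos; nra). nra. }
    apply Rle_trans with (exp (- (y * y) * (1 + t * t))); [|easy].
    rewrite <- (Rdiv_1_r (exp _)) at 2.
    apply Rmult_le_compat_l; [apply Rlt_le, exp_pos|].
    apply Rinv_le_contravar; nra.
Qed.

Lemma gauss_int_opp y : gauss_int (- y) = - gauss_int y.
Proof.
  rewrite <- (gauss_int_scale y), <- (gauss_int_scale (- y)).
  rewrite (RInt_ext (fun t => gauss (- y * t)) (fun t => gauss (y * t))); [ring|].
  intros t _. unfold gauss. do 2 f_equal. ring.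
Qed.

Lemma gauss_int_ge0 y : 0 <= y -> 0 <= gauss_int y.
Proof.
  intros Hy. apply RInt_ge_0; [easy|apply ex_RInt_gauss|].
  intros; apply Rlt_le, exp_pos.
Qed.

Definition c_erf : R := 2 / sqrt PI.
Definition erf (y : R) : R := c_erf * gauss_int y.

Lemma c_erf_pos : 0 < c_erf.
Proof. apply Rdiv_lt_0_compat; [lra|apply sqrt_lt_R0, PI_RGT_0]. Qed.

Lemma erf_sqr y : erf y * erf y = 1 - c_erf * c_erf * gauss_aux y.
Proof.
  assert (HPI : sqrt PI * sqrt PI = PI) by (apply sqrt_sqrt, Rlt_le, PI_RGT_0).
  assert (Hs : 0 < sqrt PI) by apply sqrt_lt_R0, PI_RGT_0.
  pose proof (gauss_int_sqr_add_aux y). unfold erf, c_erf.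
  replace (2 / sqrt PI * gauss_int y * (2 / sqrt PI * gauss_int y))
    with (2 / sqrt PI * (2 / sqrt PI) * (gauss_int y * gauss_int y)) by (field; lra).
  replace (gauss_int y * gauss_int y) with (sqrt PI * sqrt PI / 4 - gauss_aux y)
    by (rewrite HPI; lra).
  field. lra.
Qed.

Lemma erf_sqr_le1 y : erf y * erf y <= 1.
Proof.
  rewrite erf_sqr. pose proof (gauss_aux_bounds y). pose proof c_erf_pos.
  assert (0 <= c_erf * c_erf * gauss_aux y) by (apply Rmult_le_pos; nra). lra.
Qed.

Lemma Rabs_erf_le1 y : Rabs (erf y) <= 1.
Proof. pose proof (erf_sqr_le1 y). apply Rabs_le. nra. Qed.

Lemma erf_tail y : 0 <= y -> 1 - erf y <= c_erf * c_erf * exp (- (y * y)).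
Proof.
  intros Hy. pose proof (erf_sqr_le1 y). pose proof (gauss_aux_bounds y). pose proof c_erf_pos.
  assert (He : 0 <= erf y) by (apply Rmult_le_pos; [lra|now apply gauss_int_ge0]).
  pose proof (erf_sqr y).
  assert (c_erf * c_erf * gauss_aux y <= c_erf * c_erf * exp (- (y * y)))
    by (apply Rmult_le_compat_l; nra).
  nra.
Qed.

Lemma erf_opp y : erf (- y) = - erf y.
Proof. unfold erf. rewrite gauss_int_opp. ring. Qed.

Lemma erf_0 : erf 0 = 0.
Proof. unfold erf. rewrite gauss_int_0. ring. Qed.

Lemma is_derive_erf y : is_derive erf y (c_erf * gauss y).
Proof. apply is_derive_scal, is_derive_gauss_int. Qed.

Lemma Derive_erf y : Derive erf y = c_erf * exp (- (y * y)).
Proof. apply is_derive_unique, is_derive_erf. Qed.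

Lemma ex_derive_erf y : ex_derive erf y.
Proof. eexists. apply is_derive_erf. Qed.

Definition erfc_gap (y : R) : R := y * (1 - erf y) - c_erf / 2 * exp (- (y * y)).

Lemma is_derive_erfc_gap y : is_derive erfc_gap y (1 - erf y).
Proof.
  unfold erfc_gap. auto_derive; [apply ex_derive_erf|].
  rewrite Derive_erf. field.
Qed.

Lemma erfc_gap_incr y z : y <= z -> erfc_gap y <= erfc_gap z.
Proof.
  intros Hyz.
  destruct (MVT_gen erfc_gap y z (fun u => 1 - erf u)) as [xi [_ E]].
  - intros; apply is_derive_erfc_gap.
  - intros. apply continuity_pt_filterlim, ex_derive_Rcontinuous.
    eexists. apply is_derive_erfc_gap.
  - pose proof (Rabs_erf_le1 xi) as H.
    apply Rabs_le_between in H.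
    assert (0 <= (1 - erf xi) * (z - y)) by (apply Rmult_le_pos; lra). lra.
Qed.

(* [erfc_gap] is nondecreasing and, by the Gaussian tail bound, tends to [0] at [+oo]. *)
Lemma erfc_gap_le0 y : 0 <= y -> erfc_gap y <= 0.
Proof.
  intros Hy. destruct (Rle_or_lt (erfc_gap y) 0) as [|Hpos]; [easy|exfalso].
  pose proof c_erf_pos.
  set (z := Rmax y (1 + c_erf * c_erf / erfc_gap y)).
  assert (Hz1 : 1 + c_erf * c_erf / erfc_gap y <= z) by apply Rmax_r.
  assert (Hq : 0 < c_erf * c_erf / erfc_gap y) by (apply Rdiv_lt_0_compat; nra).
  assert (Hz : 1 < z) by lra.
  pose proof (erfc_gap_incr y z (Rmax_l _ _)).
  assert (HG : erfc_gap z <= z * (c_erf * c_erf * exp (- (z * z)))).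
  { unfold erfc_gap. pose proof (erf_tail z ltac:(lra)). pose proof (exp_pos (- (z * z))). nra. }
  assert (Hexp : z * z * exp (- (z * z)) <= 1).
  { rewrite exp_Ropp. pose proof (exp_ineq1_le (z * z)). pose proof (exp_pos (z * z)).
    apply (Rmult_le_reg_r (exp (z * z))); [easy|]. field_simplify; lra. }
  assert (erfc_gap z * z <= c_erf * c_erf) by nra.
  assert (c_erf * c_erf < erfc_gap y * z).
  { apply (Rmult_lt_reg_r (/ erfc_gap y)); [now apply Rinv_0_lt_compat|].
    replace (erfc_gap y * z * / erfc_gap y) with z by (field; lra). unfold Rdiv in Hz1. lra. }
  nra.
Qed.

(* [heat_abs x (2 * sqrt (eps * t))] is the solution of [w_t = eps w_xx] with [w(., 0) = |.|]. *)
Definition heat_abs (x a : R) : R :=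
  x * erf (x / a) + c_erf * a / 2 * exp (- ((x / a) * (x / a))).

Lemma heat_abs_opp x a : heat_abs (- x) a = heat_abs x a.
Proof.
  unfold heat_abs. replace (- x / a) with (- (x / a)) by (unfold Rdiv; ring).
  rewrite erf_opp. replace (- (x / a) * - (x / a)) with (x / a * (x / a)) by ring. ring.
Qed.

Lemma heat_abs_0 a : a <> 0 -> heat_abs 0 a = c_erf * a / 2.
Proof.
  intros Ha. unfold heat_abs. replace (0 / a) with 0 by (field; easy).
  rewrite erf_0, Rmult_0_l, Ropp_0, exp_0. ring.
Qed.

Lemma heat_abs_bounds_nonneg x a : 0 < a -> 0 <= x -> x <= heat_abs x a <= x + c_erf * a / 2.
Proof.
  intros Ha Hx. pose proof c_erf_pos.
  assert (Hy : 0 <= x / a) by (apply Rle_mult_inv_pos; lra).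
  assert (Hgap : heat_abs x a = x - a * erfc_gap (x / a))
    by (unfold heat_abs, erfc_gap; field; lra).
  pose proof (erfc_gap_le0 (x / a) Hy).
  pose proof (Rabs_erf_le1 (x / a)) as Herf. apply Rabs_le_between in Herf.
  assert (exp (- (x / a * (x / a))) <= 1).
  { apply exp_le1. assert (0 <= x / a * (x / a)) by nra. lra. }
  split; [nra|]. unfold heat_abs.
  assert (x * erf (x / a) <= x) by nra.
  assert (c_erf * a / 2 * exp (- (x / a * (x / a))) <= c_erf * a / 2)
    by (apply Rle_trans with (c_erf * a / 2 * 1); [apply Rmult_le_compat_l; [nra|easy]|lra]).
  lra.
Qed.

Lemma heat_abs_bounds x a : 0 < a -> Rabs x <= heat_abs x a <= Rabs x + c_erf * a / 2.
Proof.
  intros Ha. destruct (Rle_or_lt 0 x) as [Hx|Hx].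
  - rewrite Rabs_pos_eq by lra. now apply heat_abs_bounds_nonneg.
  - rewrite Rabs_left, <- heat_abs_opp by lra. apply heat_abs_bounds_nonneg; lra.
Qed.

Section HeatBarrier.
Variables A A' : R -> R.
Hypothesis A_pos : forall t, 0 < A t.
Hypothesis A_deriv : forall t, is_derive A t (A' t).
Hypothesis A'_cont : forall t, continuous A' t.

Lemma continuity_2d_pt_comp_ratio (f : R -> R) x t :
  (forall z, continuity_pt f z) -> continuity_2d_pt (fun y s => f (y / A s)) x t.
Proof.
  intros Hf. apply (continuity_1d_2d_pt_comp f (fun y s => y / A s)); [apply Hf|].
  apply continuity_2d_pt_mult; [apply continuity_2d_pt_id1|].
  apply (continuity_2d_pt_of_time (fun s => / A s)), continuity_pt_inv.
  - eapply is_derive_continuity_pt, A_deriv.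
  - specialize (A_pos t). lra.
Qed.

Lemma smooth_with_heat_abs :
  smooth_with (fun x t => heat_abs x (A t))
    (fun x t => c_erf / 2 * exp (- ((x / A t) * (x / A t))) * A' t)
    (fun x t => erf (x / A t)) (fun x t => c_erf / A t * exp (- ((x / A t) * (x / A t)))).
Proof.
  assert (Hne : forall t, A t <> 0) by (intros t; specialize (A_pos t); lra).
  assert (CA : forall t, continuity_pt A t) by (intros; eapply is_derive_continuity_pt, A_deriv).
  assert (Cinv : forall x t, continuity_2d_pt (fun _ s => / A s) x t).
  { intros x t. apply (continuity_2d_pt_of_time (fun s => / A s)), continuity_pt_inv; auto. }
  assert (Cerf : forall x t, continuity_2d_pt (fun y s => erf (y / A s)) x t).
  { intros x t. apply continuity_2d_pt_comp_ratio. intros z.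
    eapply is_derive_continuity_pt, is_derive_erf. }
  assert (Cexp : forall x t, continuity_2d_pt (fun y s => exp (- ((y / A s) * (y / A s)))) x t).
  { intros x t. apply (continuity_2d_pt_comp_ratio (fun z => exp (- (z * z)))). intros z.
    apply continuity_pt_filterlim, (ex_derive_Rcontinuous (fun z => exp (- (z * z)))).
    auto_derive. easy. }
  intros x t. split; [|split; [|split]].
  - apply (is_derive_ext (fun s => heat_abs x (A s))); [reflexivity|].
    replace (c_erf / 2 * exp (- (x / A t * (x / A t))) * A' t)
      with (A' t * (c_erf / 2 * exp (- (x / A t * (x / A t))))) by ring.
    apply (is_derive_Rcomp (fun a => heat_abs x a) A); [|apply A_deriv].
    unfold heat_abs. auto_derive; [repeat split; auto; apply ex_derive_erf|].
    rewrite Derive_erf. unfold Rdiv. field. apply Hne.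
  - unfold heat_abs. auto_derive; [repeat split; auto; apply ex_derive_erf|].
    rewrite Derive_erf. unfold Rdiv. field. apply Hne.
  - auto_derive; [repeat split; auto; apply ex_derive_erf|].
    rewrite Derive_erf. unfold Rdiv. field. apply Hne.
  - split; [|split; [|split]].
    + unfold heat_abs. apply continuity_2d_pt_plus; apply continuity_2d_pt_mult; auto.
      * apply continuity_2d_pt_id1.
      * unfold Rdiv. apply continuity_2d_pt_mult; [|apply continuity_2d_pt_const].
        apply continuity_2d_pt_mult; [apply continuity_2d_pt_const|].
        apply (continuity_2d_pt_of_time A), CA.
    + apply continuity_2d_pt_mult;
        [apply continuity_2d_pt_mult; [apply continuity_2d_pt_const|auto]|].
      apply (continuity_2d_pt_of_time A'), continuity_pt_filterlim, A'_cont.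
    + apply Cerf.
    + unfold Rdiv. apply continuity_2d_pt_mult; auto.
      apply continuity_2d_pt_mult; [apply continuity_2d_pt_const|apply Cinv].
Qed.

End HeatBarrier.

Lemma smooth_with_time (r r' : R -> R) :
  (forall t, is_derive r t (r' t)) -> (forall t, continuous r' t) ->
  smooth_with (fun _ t => r t) (fun _ t => r' t) (fun _ _ => 0) (fun _ _ => 0).
Proof.
  intros Hr Hr' x t.
  split; [apply Hr|]. split; [apply is_derive_Rconst|]. split; [apply is_derive_Rconst|].
  split; [apply (continuity_2d_pt_of_time r), (is_derive_continuity_pt r t (r' t)), Hr|].
  split; [apply (continuity_2d_pt_of_time r'), continuity_pt_filterlim, Hr'|].
  split; apply continuity_2d_pt_const.
Qed.

Section HeatBarriers.
Variables (eps : R) (U : R -> R -> R) (A A' : R -> R).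
Hypothesis eps_ge0 : 0 <= eps.
Hypothesis U_sol : visc_solution Fq eps g0 U.
Hypothesis A_pos : forall t, 0 < A t.
Hypothesis A_deriv : forall t, is_derive A t (A' t).
Hypothesis A'_cont : forall t, continuous A' t.

Lemma heat_residual x t r' :
  -1 * (c_erf / 2 * exp (- ((x / A t) * (x / A t))) * A' t) + 1 * r' +
  Fq (-1 * erf (x / A t) + 1 * 0)
  - eps * (-1 * (c_erf / A t * exp (- ((x / A t) * (x / A t)))) + 1 * 0)
  = c_erf * exp (- ((x / A t) * (x / A t))) / (2 * A t) * (2 * eps - A t * A' t)
    + erf (x / A t) * erf (x / A t) / 2 + r'.
Proof. rewrite Fq_eq. field. specialize (A_pos t). lra. Qed.

Lemma heat_drift_coef_nonneg x t : 0 <= c_erf * exp (- ((x / A t) * (x / A t))) / (2 * A t).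
Proof.
  pose proof c_erf_pos. pose proof (exp_pos (- ((x / A t) * (x / A t)))). specialize (A_pos t).
  apply Rle_mult_inv_pos; nra.
Qed.

Lemma visc_solution_ge_heat :
  (forall t, 0 < t -> 2 * eps <= A t * A' t) ->
  forall x t, 0 <= t -> - heat_abs x (A t) - t / 2 <= U x t.
Proof.
  destruct U_sol as (HUc & HUg & HU0 & _ & HUsuper).
  intros HAA x t Ht.
  replace (- heat_abs x (A t) - t / 2) with (-1 * heat_abs x (A t) + 1 * (- t / 2)) by field.
  apply (subsolution_le_visc_super eps U _ _ _ _ eps_ge0 HUc HUg HUsuper
    (smooth_with_lin (-1) 1 _ _ _ _ _ _ _ _ (smooth_with_heat_abs A A' A_pos A_deriv A'_cont)
       (smooth_with_time (fun t => - t / 2) (fun _ => - / 2)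
          ltac:(intros; auto_derive; [easy|field]) ltac:(intros; apply continuous_const))));
    [intros y s Hs|intros T _; exists 1; intros y s Hs|intros y|exact Ht].
  - rewrite heat_residual. specialize (HAA s Hs). pose proof (heat_drift_coef_nonneg y s).
    pose proof (erf_sqr_le1 (y / A s)).
    nra.
  - pose proof (heat_abs_bounds y (A s) (A_pos s)). pose proof (Rabs_pos y). lra.
  - rewrite HU0. unfold g0. pose proof (heat_abs_bounds y (A 0) (A_pos 0)). lra.
Qed.

Lemma visc_solution_le_heat :
  (forall t, 0 < t -> A t * A' t <= 2 * eps) ->
  (forall T, 0 < T -> exists M, forall t, 0 <= t <= T -> A t <= M) ->
  forall x t, 0 <= t -> U x t <= - heat_abs x (A t) + c_erf * A 0 / 2.
Proof.
  destruct U_sol as (HUc & HUg & HU0 & HUsub & _).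
  intros HAA HAbound x t Ht. pose proof c_erf_pos.
  replace (- heat_abs x (A t) + c_erf * A 0 / 2)
    with (-1 * heat_abs x (A t) + 1 * (c_erf * A 0 / 2)) by field.
  apply (visc_sub_le_supersolution eps U _ _ _ _ eps_ge0 HUc HUg HUsub
    (smooth_with_lin (-1) 1 _ _ _ _ _ _ _ _ (smooth_with_heat_abs A A' A_pos A_deriv A'_cont)
       (smooth_with_time (fun _ => c_erf * A 0 / 2) (fun _ => 0)
          ltac:(intros; apply is_derive_Rconst) ltac:(intros; apply continuous_const))));
    [intros y s Hs|intros y s Hs|intros T HT|intros y|exact Ht].
  - rewrite heat_residual. specialize (HAA s Hs). pose proof (heat_drift_coef_nonneg y s).
    pose proof (Rle_0_sqr (erf (y / A s))). unfold Rsqr in *.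
    nra.
  - replace (-1 * erf (y / A s) + 1 * 0) with (- erf (y / A s)) by ring.
    rewrite Rabs_Ropp. apply Rabs_erf_le1.
  - destruct (HAbound T HT) as [M HM]. exists (1 + c_erf * M / 2). intros y s Hs.
    pose proof (heat_abs_bounds y (A s) (A_pos s)). pose proof (Rabs_pos y).
    specialize (HM s Hs). pose proof (A_pos s). pose proof (A_pos 0).
    assert (c_erf * A s <= c_erf * M) by (apply Rmult_le_compat_l; lra).
    assert (0 <= c_erf * M * Rabs y) by (apply Rmult_le_pos; nra).
    nra.
  - rewrite HU0. unfold g0. pose proof (heat_abs_bounds y (A 0) (A_pos 0)). lra.
Qed.
End HeatBarriers.

Lemma visc_solution_le_plane eps U sg : 0 <= eps -> visc_solution Fq eps g0 U ->
  Rabs sg = 1 -> forall x t, 0 <= t -> U x t <= sg * x - t / 2.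
Proof.
  intros Heps (HUc & HUg & HU0 & HUsub & _) Hsg x t Ht.
  assert (Hline : forall y, - Rabs y <= sg * y).
  { intros y. assert (Rabs (sg * y) <= Rabs y) by (rewrite Rabs_mult, Hsg; lra).
    apply Rabs_le_between in H. lra. }
  replace (sg * x - t / 2) with (1 * (sg * x) + - t / 2) by field.
  apply (visc_sub_le_supersolution eps U _ _ _ _ Heps HUc HUg HUsub
    (smooth_with_sep (fun _ => 1) (fun _ => 0) (fun y => sg * y) (fun _ => sg) (fun _ => 0)
       (fun s => - s / 2) (fun _ => - / 2)
       ltac:(intros; apply is_derive_Rconst) ltac:(intros; auto_derive; [easy|field])
       ltac:(intros; auto_derive; [easy|ring]) ltac:(intros; apply is_derive_Rconst)
       ltac:(intros; apply continuous_const) ltac:(intros; apply continuous_const)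
       ltac:(intros; apply continuous_const)));
    [intros y s Hs|intros y s Hs|intros T HT; exists (1 + T / 2); intros y s Hs|intros y|exact Ht].
  - rewrite Fq_eq.
    assert (sg * sg = Rabs sg * Rabs sg)
      by (rewrite <- Rabs_mult; symmetry; apply Rabs_pos_eq; nra).
    rewrite Hsg in H. nra.
  - rewrite Rmult_1_l, Hsg. lra.
  - pose proof (Hline y). pose proof (Rabs_pos y). nra.
  - rewrite HU0. unfold g0. pose proof (Hline y). lra.
Qed.

Lemma visc_solution_le_cone eps U : 0 <= eps -> visc_solution Fq eps g0 U ->
  forall x t, 0 <= t -> U x t <= - Rabs x - t / 2.
Proof.
  intros Heps HU x t Ht. destruct (Rle_or_lt 0 x) as [Hx|Hx].
  - rewrite Rabs_pos_eq by lra. replace (- x) with (-1 * x) by ring.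
    apply (visc_solution_le_plane eps); auto. rewrite Rabs_left; lra.
  - rewrite Rabs_left, Ropp_involutive by lra. replace (x - t / 2) with (1 * x - t / 2) by field.
    apply (visc_solution_le_plane eps); auto. apply Rabs_R1.
Qed.

Lemma sqrt_add_le a b : 0 <= a -> 0 <= b -> sqrt (a + b) <= sqrt a + sqrt b.
Proof.
  intros Ha Hb. pose proof (sqrt_pos a). pose proof (sqrt_pos b).
  apply Rsqr_incr_0_var; [|lra]. unfold Rsqr.
  rewrite sqrt_sqrt by lra.
  replace ((sqrt a + sqrt b) * (sqrt a + sqrt b))
    with (sqrt a * sqrt a + sqrt b * sqrt b + 2 * sqrt a * sqrt b) by ring.
  rewrite !sqrt_sqrt by lra. nra.
Qed.

Lemma le_of_sqrt_slack (k X Y : R) : 0 < k -> (forall s, 0 < s -> X <= Y + k * sqrt s) -> X <= Y.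
Proof.
  intros Hk H. apply Rle_plus_epsilon. intros e He.
  specialize (H ((e / k) * (e / k)) ltac:(apply Rmult_lt_0_compat; apply Rdiv_lt_0_compat; lra)).
  rewrite sqrt_square in H by (apply Rlt_le, Rdiv_lt_0_compat; lra).
  replace (k * (e / k)) with e in H by (field; lra). exact H.
Qed.

(* With [a = 2 sqrt (eps tau + s)], the barrier conditions [2 eps <= a a'] and [a a' <= 2 eps]
   become [1 <= tau'] and [tau' <= 1]; the shift [s > 0] keeps [a] positive and smooth. *)
Definition sqrt_time (eps s : R) (tau : R -> R) (t : R) : R := 2 * sqrt (eps * tau t + s).

Section TimeChange.
Variables (eps s : R) (tau tau' : R -> R).
Hypotheses (eps_ge0 : 0 <= eps) (s_gt0 : 0 < s) (tau_ge0 : forall t, 0 <= tau t).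
Hypothesis tau_deriv : forall t, is_derive tau t (tau' t).
Hypothesis tau'_cont : forall t, continuous tau' t.

Lemma sqrt_time_pos t : 0 < sqrt_time eps s tau t.
Proof.
  assert (0 < eps * tau t + s) by (specialize (tau_ge0 t); nra).
  unfold sqrt_time. pose proof (sqrt_lt_R0 _ H). lra.
Qed.

Lemma is_derive_sqrt_time t :
  is_derive (sqrt_time eps s tau) t (eps * tau' t / sqrt (eps * tau t + s)).
Proof.
  assert (Hw : 0 < eps * tau t + s) by (specialize (tau_ge0 t); nra).
  pose proof (sqrt_lt_R0 _ Hw).
  replace (eps * tau' t / sqrt (eps * tau t + s))
    with (2 * ((eps * tau' t + 0) / (2 * sqrt (eps * tau t + s)))) by (field; lra).
  apply (is_derive_ext (fun t => 2 * sqrt (eps * tau t + s))); [reflexivity|].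
  apply is_derive_scal, (is_derive_sqrt (fun t => eps * tau t + s)); [|exact Hw].
  apply is_derive_Rplus; [now apply is_derive_scal|apply is_derive_Rconst].
Qed.

Lemma continuous_sqrt_time' t : continuous (fun t => eps * tau' t / sqrt (eps * tau t + s)) t.
Proof.
  assert (Hw : 0 < eps * tau t + s) by (specialize (tau_ge0 t); nra).
  apply continuity_pt_filterlim. unfold Rdiv.
  apply continuity_pt_mult.
  - apply continuity_pt_mult; [apply continuity_pt_const; now intros|].
    apply continuity_pt_filterlim, tau'_cont.
  - apply continuity_pt_inv; [|pose proof (sqrt_lt_R0 _ Hw); lra].
    apply (continuity_pt_comp (fun t => eps * tau t + s) sqrt).
    + apply continuity_pt_plus; [apply continuity_pt_mult|apply continuity_pt_const; now intros].
      * apply continuity_pt_const; now intros.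
      * eapply is_derive_continuity_pt, tau_deriv.
    + apply continuity_pt_sqrt. lra.
Qed.

Lemma sqrt_time_mul_deriv t :
  sqrt_time eps s tau t * (eps * tau' t / sqrt (eps * tau t + s)) = 2 * eps * tau' t.
Proof.
  assert (Hw : 0 < eps * tau t + s) by (specialize (tau_ge0 t); nra).
  unfold sqrt_time. pose proof (sqrt_lt_R0 _ Hw). field. lra.
Qed.

End TimeChange.

Lemma exp_neg_div_le1 t s : 0 < s -> 0 <= t -> exp (- t / s) <= 1.
Proof.
  intros Hs Ht. apply exp_le1.
  assert (0 <= t / s) by (apply Rle_mult_inv_pos; lra). unfold Rdiv in *. lra.
Qed.

Definition tau_sub (s t : R) : R := t + s + s * ((1 - exp (- t / s)) * (1 - exp (- t / s))).
Definition tau_sub' (s t : R) : R := 1 + 2 * (1 - exp (- t / s)) * exp (- t / s).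

Section TauSub.
Variable s : R.
Hypothesis s_gt0 : 0 < s.

Lemma is_derive_tau_sub t : is_derive (tau_sub s) t (tau_sub' s t).
Proof. unfold tau_sub, tau_sub'. auto_derive; [lra|]. unfold Rdiv. field. lra. Qed.

Lemma continuous_tau_sub' t : continuous (tau_sub' s) t.
Proof. apply ex_derive_Rcontinuous. unfold tau_sub'. auto_derive. lra. Qed.

Lemma tau_sub_pos t : 0 < tau_sub s t.
Proof.
  unfold tau_sub. set (E := exp (- t / s)).
  assert (0 <= s * ((1 - E) * (1 - E))) by (apply Rmult_le_pos; [lra|apply Rle_0_sqr]).
  destruct (Rle_or_lt 0 t) as [Ht|Ht]; [lra|].
  assert (HE : 1 - t / s <= E) by (pose proof (exp_ineq1_le (- t / s)); unfold E, Rdiv in *; lra).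
  assert (Hts : 0 < - t / s) by (apply Rdiv_lt_0_compat; lra).
  assert ((- t / s) * (- t / s) <= (1 - E) * (1 - E)) by nra.
  assert (s * ((- t / s) * (- t / s)) = t * t / s) by (field; lra).
  assert (0 < (t * t + t * s + s * s) / s).
  { apply Rdiv_lt_0_compat; [|lra]. pose proof (Rle_0_sqr (t + s / 2)). unfold Rsqr in *. nra. }
  replace ((t * t + t * s + s * s) / s) with (t + s + t * t / s) in * by (field; lra).
  nra.
Qed.

Lemma tau_sub'_ge1 t : 0 <= t -> 1 <= tau_sub' s t.
Proof.
  intros Ht. unfold tau_sub'. pose proof (exp_neg_div_le1 t s s_gt0 Ht).
  pose proof (exp_pos (- t / s)). nra.
Qed.

Lemma tau_sub_le t : 0 <= t -> tau_sub s t <= t + 2 * s.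
Proof.
  intros Ht. unfold tau_sub. pose proof (exp_neg_div_le1 t s s_gt0 Ht).
  pose proof (exp_pos (- t / s)).
  assert ((1 - exp (- t / s)) * (1 - exp (- t / s)) <= 1) by nra. nra.
Qed.

End TauSub.

Definition tau_super (s t : R) : R := t + s * exp (- t / s).
Definition tau_super' (s t : R) : R := 1 - exp (- t / s).

Section TauSuper.
Variable s : R.
Hypothesis s_gt0 : 0 < s.

Lemma is_derive_tau_super t : is_derive (tau_super s) t (tau_super' s t).
Proof. unfold tau_super, tau_super'. auto_derive; [lra|]. unfold Rdiv. field. lra. Qed.

Lemma continuous_tau_super' t : continuous (tau_super' s) t.
Proof. apply ex_derive_Rcontinuous. unfold tau_super'. auto_derive. lra. Qed.

Lemma tau_super_bounds t : t <= tau_super s t /\ 0 < tau_super s t.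
Proof.
  unfold tau_super. pose proof (exp_pos (- t / s)).
  pose proof (exp_ineq1_le (- t / s)).
  assert (s * (1 + - t / s) = s - t) by (field; lra). nra.
Qed.

Lemma tau_super_le t : 0 <= t -> tau_super s t <= t + s.
Proof. intros Ht. unfold tau_super. pose proof (exp_neg_div_le1 t s s_gt0 Ht). nra. Qed.

Lemma tau_super'_le1 t : tau_super' s t <= 1.
Proof. unfold tau_super'. pose proof (exp_pos (- t / s)). lra. Qed.

Lemma tau_super_0 : tau_super s 0 = s.
Proof. unfold tau_super. replace (- 0 / s) with 0 by (field; lra). rewrite exp_0. field. Qed.

End TauSuper.

Lemma visc_solution_ge_cone eps U : 0 <= eps -> visc_solution Fq eps g0 U ->
  forall x t, 0 <= t -> - Rabs x - t / 2 - c_erf * sqrt (eps * t) <= U x t.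
Proof.
  intros Heps HU x t Ht. pose proof c_erf_pos.
  apply (le_of_sqrt_slack (c_erf * sqrt (2 * eps + 1))).
  { apply Rmult_lt_0_compat; [lra|apply sqrt_lt_R0; lra]. }
  intros s Hs.
  assert (Htau : forall t, 0 <= tau_sub s t) by (intros; apply Rlt_le, tau_sub_pos, Hs).
  set (a := sqrt_time eps s (tau_sub s)).
  assert (HL : - heat_abs x (a t) - t / 2 <= U x t).
  { apply (visc_solution_ge_heat eps U a
             (fun t => eps * tau_sub' s t / sqrt (eps * tau_sub s t + s)));
      auto; intros.
    - now apply sqrt_time_pos.
    - now apply is_derive_sqrt_time, is_derive_tau_sub.
    - apply continuous_sqrt_time'; auto using is_derive_tau_sub, continuous_tau_sub'.
    - unfold a. rewrite sqrt_time_mul_deriv by auto.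
      pose proof (tau_sub'_ge1 s Hs t0 (Rlt_le _ _ H0)). nra. }
  pose proof (heat_abs_bounds x (a t) (sqrt_time_pos eps s (tau_sub s) Heps Hs Htau t)).
  assert (Hsq : sqrt (eps * tau_sub s t + s) <= sqrt (eps * t) + sqrt (2 * eps + 1) * sqrt s).
  { rewrite <- sqrt_mult by lra.
    apply Rle_trans with (sqrt (eps * t + (2 * eps + 1) * s)); [|apply sqrt_add_le; nra].
    apply sqrt_le_1_alt. pose proof (tau_sub_le s Hs t Ht). nra. }
  unfold a, sqrt_time in *. nra.
Qed.

Lemma visc_solution_origin_le eps U : 0 <= eps -> visc_solution Fq eps g0 U ->
  forall t, 0 <= t -> U 0 t <= - (c_erf * sqrt (eps * t)).
Proof.
  intros Heps HU t Ht. pose proof c_erf_pos.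
  apply (le_of_sqrt_slack (c_erf * sqrt (eps + 1))).
  { apply Rmult_lt_0_compat; [lra|apply sqrt_lt_R0; lra]. }
  intros s Hs.
  assert (Htau : forall t, 0 <= tau_super s t) by (intros; apply Rlt_le, tau_super_bounds, Hs).
  set (a := sqrt_time eps s (tau_super s)).
  assert (HU0 : U 0 t <= - heat_abs 0 (a t) + c_erf * a 0 / 2).
  { apply (visc_solution_le_heat eps U a
             (fun t => eps * tau_super' s t / sqrt (eps * tau_super s t + s)));
      auto; intros.
    - now apply sqrt_time_pos.
    - now apply is_derive_sqrt_time, is_derive_tau_super.
    - apply continuous_sqrt_time'; auto using is_derive_tau_super, continuous_tau_super'.
    - unfold a. rewrite sqrt_time_mul_deriv by auto.
      pose proof (tau_super'_le1 s t0). nra.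
    - exists (2 * sqrt (eps * (T + s) + s)). intros t' Ht'. unfold a.
      apply Rmult_le_compat_l; [lra|]. apply sqrt_le_1_alt.
      pose proof (tau_super_le s Hs t' (proj1 Ht')). nra. }
  rewrite heat_abs_0 in HU0
    by (unfold a; pose proof (sqrt_time_pos eps s (tau_super s) Heps Hs Htau t); lra).
  unfold a, sqrt_time in HU0. rewrite tau_super_0 in HU0 by exact Hs.
  assert (sqrt (eps * t) <= sqrt (eps * tau_super s t + s)).
  { apply sqrt_le_1_alt. pose proof (tau_super_bounds s Hs t). nra. }
  assert (sqrt (eps * s + s) = sqrt (eps + 1) * sqrt s)
    by (rewrite <- sqrt_mult by lra; f_equal; ring).
  nra.
Qed.

Lemma filterlim_at_right_0_squeeze (f : R -> R) (l k : R) :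
  (forall t, 0 < t -> l <= f t <= l + k * sqrt t) -> filterlim f (at_right 0) (locally l).
Proof.
  intros Hf.
  apply (filterlim_le_le (fun _ => l) f (fun t => l + k * sqrt t) l).
  - exists (mkposreal 1 Rlt_0_1). intros t _ Ht. now apply Hf.
  - apply filterlim_const.
  - apply (filterlim_filter_le_1 _ (filter_le_within (F := locally (0 : R)) (fun u : R => 0 < u))).
    replace (Finite l) with (Finite (l + k * sqrt 0)) by (rewrite sqrt_0; f_equal; ring).
    apply continuity_pt_filterlim, continuity_pt_plus; [apply continuity_pt_const; now intros|].
    apply continuity_pt_mult; [apply continuity_pt_const; now intros|].
    apply continuity_pt_sqrt. lra.
Qed.

Lemma visc_solution_inviscid u : visc_solution Fq 0 g0 u ->
  forall x t, 0 <= t -> u x t = - Rabs x - t / 2.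
Proof.
  intros Hu x t Ht. apply Rle_antisym.
  - now apply (visc_solution_le_cone 0).
  - pose proof (visc_solution_ge_cone 0 u (Rle_refl 0) Hu x t Ht).
    rewrite Rmult_0_l, sqrt_0, Rmult_0_r in H. lra.
Qed.

Lemma visc_solution_origin_ratio eps U : 0 < eps -> visc_solution Fq eps g0 U ->
  forall t, 0 < t ->
    - c_erf <= (U 0 t + t / 2) / sqrt (t * eps) <= - c_erf + / (2 * sqrt eps) * sqrt t.
Proof.
  intros Heps HU t Ht.
  pose proof (visc_solution_ge_cone eps U (Rlt_le _ _ Heps) HU 0 t (Rlt_le _ _ Ht)) as Hlo.
  pose proof (visc_solution_origin_le eps U (Rlt_le _ _ Heps) HU t (Rlt_le _ _ Ht)) as Hup.
  rewrite Rabs_R0 in Hlo. rewrite (Rmult_comm eps) in Hlo, Hup.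
  rewrite sqrt_mult in * by lra.
  assert (Hst : sqrt t * sqrt t = t) by (apply sqrt_sqrt; lra).
  assert (Ht' : 0 < sqrt t) by (apply sqrt_lt_R0; lra).
  assert (Hse : 0 < sqrt eps) by (apply sqrt_lt_R0; lra).
  assert (Hq : 0 < sqrt t * sqrt eps) by nra.
  split; apply (Rmult_le_reg_r (sqrt t * sqrt eps)); try exact Hq; field_simplify; lra.
Qed.

Theorem proposition4p4 :
  forall (ue : R -> R -> R -> R) (u : R -> R -> R),
    (forall eps, 0 < eps -> visc_solution Fq eps g0 (ue eps)) ->
    visc_solution Fq 0 g0 u ->
    (exists C, 0 < C /\
       forall eps T, 0 < eps < 1 -> 0 < T ->
         forall x t, 0 <= t <= T ->
           Rabs (ue eps x t - u x t) <= C * sqrt (T * eps)) /\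
    (forall eps, 0 < eps < 1 ->
       filterlim (fun t => (ue eps 0 t - u 0 t) / sqrt (t * eps))
         (at_right 0) (locally (- (2 / sqrt PI)))).
Proof.
  intros ue u Hue Hu. split.
  - exists c_erf. split; [exact c_erf_pos|].
    intros eps T [Heps _] HT x t [Ht HtT].
    rewrite (visc_solution_inviscid u Hu x t Ht).
    pose proof (visc_solution_le_cone eps (ue eps) (Rlt_le _ _ Heps) (Hue eps Heps) x t Ht).
    pose proof (visc_solution_ge_cone eps (ue eps) (Rlt_le _ _ Heps) (Hue eps Heps) x t Ht).
    assert (sqrt (eps * t) <= sqrt (T * eps)) by (apply sqrt_le_1_alt; nra).
    pose proof c_erf_pos. apply Rabs_le. nra.
  - intros eps [Heps _].
    apply (filterlim_at_right_0_squeeze _ _ (/ (2 * sqrt eps))). intros t Ht.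
    replace (ue eps 0 t - u 0 t) with (ue eps 0 t + t / 2)
      by (rewrite (visc_solution_inviscid u Hu 0 t (Rlt_le _ _ Ht)), Rabs_R0; field).
    exact (visc_solution_origin_ratio eps (ue eps) Heps (Hue eps Heps) t Ht).
Qed.
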